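(* Let $T$ be a continuous linear operator on a real or complex separable infinite-dimensional F-space $X$ and let $\mathcal{F}$ be a right-invariant Furstenberg family. If $x$ is an $\mathcal{F}$-hypercyclic vector for $T$, then $\{p(T)x: p \text{ polynomial}\}\setminus\{0\}$ is a dense set consisting of $\mathcal{F}$-hypercyclic vectors for $T$. In particular, every $\mathcal{F}$-hypercyclic operator admits a dense $T$-invariant vector subspace consisting, except for $0$, of $\mathcal{F}$-hypercyclic vectors.
   Context: A Furstenberg family is a collection $\mathcal{F}$ of infinite subsets of $\mathbb{N}_0$, closed under supersets, with $A\cap[n,\infty)\in\mathcal{F}$ whenever $A\in\mathcal{F}$, $n\in\mathbb{N}$. It is right-invariant if $A+n=\{k+n:k\in A\}\in\mathcal{F}$ for every $A\in\mathcal{F}$ and $n\in\mathbb{N}_0$. A vector $x$ is $\mathcal{F}$-hypercyclic for $T$ if $\{n\geq0:T^nx\in U\}\in\mathcal{F}$ for every non-empty open $U\subset X$; $T$ is $\mathcal{F}$-hypercyclic if it has such a vector. *)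

From mathcomp Require Import all_boot all_order all_algebra.
From mathcomp Require Import all_classical all_reals all_analysis.
From mathcomp Require Export complex.
Set Implicit Arguments. Unset Strict Implicit. Unset Printing Implicit Defensive.
Import Order.TTheory GRing.Theory Num.Theory.
Local Open Scope classical_set_scope.
Local Open Scope ring_scope.

Definition Fspace (R : realType) (K : numFieldType) (X : topologicalLmodType K) :=
  exists d : X -> X -> R,
    (forall x y, 0 <= d x y) /\
    (forall x y, d x y = 0 <-> x = y) /\
    (forall x y, d x y = d y x) /\
    (forall x y z, d x z <= d x y + d y z) /\
    (forall x y z, d (x + z) (y + z) = d x y) /\
        (forall A : set X, open A <->
           (forall x, A x -> exists2 e : R, 0 < e & forall y, d x y < e -> A y)) /\
        (forall u : nat -> X,
           (forall e : R, 0 < e -> exists N, forall m n, (N <= m)%N -> (N <= n)%N ->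
               d (u m) (u n) < e) ->
           exists l, forall e : R, 0 < e -> exists N, forall n, (N <= n)%N ->
               d (u n) l < e).

Definition separable (X : topologicalType) :=
  exists D : set X, countable D /\ dense D.

Definition infinite_dimensional (K : numFieldType) (X : lmodType K) :=
  forall s : seq X, exists x : X,
    forall c : 'I_(size s) -> K, x <> \sum_(i < size s) c i *: s`_i.

Definition polyOp (K : numFieldType) (X : lmodType K) (p : {poly K})
    (T : X -> X) (x : X) : X :=
  \sum_(i < size p) p`_i *: iter i T x.

Definition furstenberg_family (F : set (set nat)) :=
  [/\ (forall A, F A -> infinite_set A),
      (forall A B, F A -> A `<=` B -> F B) &
      (forall A n, F A -> (0 < n)%N -> F (A `&` [set k | (n <= k)%N]))].

Definition right_invariant (F : set (set nat)) :=
  forall A n, F A -> F [set (k + n)%N | k in A].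

Definition F_hypercyclic_vector (X : topologicalType) (F : set (set nat))
    (T : X -> X) (x : X) :=
  forall U : set X, open U -> U !=set0 -> F [set n | U (iter n T x)].

Definition F_hypercyclic (X : topologicalType) (F : set (set nat)) (T : X -> X) :=
  exists x, F_hypercyclic_vector F T x.

Definition conclusion (K : numFieldType) (X : topologicalLmodType K)
    (T : X -> X) (F : set (set nat)) :=
  (forall x : X, F_hypercyclic_vector F T x ->
     let P := [set y | exists p : {poly K}, y = polyOp p T x] `\ 0 in
     dense P /\ (forall y, P y -> F_hypercyclic_vector F T y))
  /\
  (F_hypercyclic F T ->
     exists M : set X,
       [/\ M 0, (forall (a : K) u v, M u -> M v -> M (a *: u + v)),
           (forall u, M u -> M (T u)), dense M &
           (forall u, M u -> u <> 0 -> F_hypercyclic_vector F T u)]).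

From HB Require Import structures.
From mathcomp Require Import all_boot all_order all_algebra.
From mathcomp Require Import all_classical all_reals all_analysis.
From mathcomp Require Import complex ring lra zify.
Import Order.TTheory GRing.Theory Num.Theory.
Set Implicit Arguments. Unset Strict Implicit. Unset Printing Implicit Defensive.
Local Open Scope classical_set_scope.
Local Open Scope ring_scope.

(* Since iterates of T commute with p(T), the return times of p(T)x to an open set U
   contain the return times of x to p(T)^-1(U); the latter set is in F as soon as
   p(T) has dense range.  So everything reduces to: p(T) has dense range for every
   nonzero polynomial p.  Factoring p over R or C, it suffices to treat T - l and
   T^2 - aT + b with a^2 < 4b.  The range of such a factor q(T) is T-invariant and
   the orbit of x is dense, so it suffices that x lies in the closure of the range.
   Divisibilities in K[X] give elements of that range: T^n x - l^n x, and
   T^n x - al_n x - be_n Tx where X^n = al_n + be_n X modulo X^2 - aX + b.  When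
   |l| < 1 (resp. b < 1) these coefficients tend to 0 and we take T^n x close to x;
   otherwise we rescale by l^-n (resp. eliminate Tx between two consecutive n, with
   bounded coefficients) and take T^n x close to 0. *)

Section PolyOp.
Variables (K : numFieldType) (X : lmodType K) (T : {linear X -> X}).

Lemma iter_is_linear n : linear (iter n T).
Proof. by move=> a u v; elim: n => //= n ->; rewrite linearP. Qed.

HB.instance Definition _ n :=
  GRing.isLinear.Build K X X *:%R (iter n T) (iter_is_linear n).

Lemma polyOp_is_linear (p : {poly K}) : linear (polyOp p T).
Proof.
move=> a u v; rewrite /polyOp scaler_sumr -big_split; apply: eq_bigr => i _ /=.
by rewrite linearP scalerDr !scalerA mulrC.
Qed.

HB.instance Definition _ (p : {poly K}) :=
  GRing.isLinear.Build K X X *:%R (polyOp p T) (polyOp_is_linear p).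

Lemma polyOp_wide (p : {poly K}) n y : (size p <= n)%N ->
  polyOp p T y = \sum_(i < n) p`_i *: iter i T y.
Proof.
move=> hn; rewrite /polyOp -(subnKC hn) big_split_ord /=.
rewrite [X in _ + X]big1 ?addr0 // => i _.
by rewrite nth_default ?scale0r // leq_addr.
Qed.

Lemma polyOp0 y : polyOp 0 T y = 0.
Proof. by rewrite /polyOp size_poly0 big_ord0. Qed.

Lemma polyOpD (p q : {poly K}) y : polyOp (p + q) T y = polyOp p T y + polyOp q T y.
Proof.
set n := maxn (size p) (size q).
rewrite (polyOp_wide (n:=n)) ?size_polyD // (polyOp_wide (p:=p) (n:=n)) ?leq_maxl //.
rewrite (polyOp_wide (p:=q) (n:=n)) ?leq_maxr // -big_split /=.
by apply: eq_bigr => i _; rewrite coefD scalerDl.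
Qed.

Lemma polyOpZ a (p : {poly K}) y : polyOp (a *: p) T y = a *: polyOp p T y.
Proof.
rewrite (polyOp_wide (n:=size p)) ?size_scale_leq // /polyOp scaler_sumr.
by apply: eq_bigr => i _; rewrite coefZ scalerA.
Qed.

Lemma polyOpN (p : {poly K}) y : polyOp (- p) T y = - polyOp p T y.
Proof. by rewrite -[- p]scaleN1r polyOpZ scaleN1r. Qed.

Lemma polyOpC c y : polyOp c%:P T y = c *: y.
Proof. by rewrite (polyOp_wide (n:=1)) ?size_polyC ?leq_b1 // big_ord1 coefC. Qed.

Lemma polyOp1 y : polyOp 1 T y = y.
Proof. by rewrite -polyC1 polyOpC scale1r. Qed.

Lemma polyOpMX (p : {poly K}) y : polyOp (p * 'X) T y = polyOp p T (T y).
Proof.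
rewrite (polyOp_wide (n:=(size p).+1)); last first.
  have [->|p0] := eqVneq p 0; first by rewrite mul0r size_poly0.
  by rewrite size_mulX.
rewrite big_ord_recl coefMX scale0r add0r /polyOp.
by apply: eq_bigr => i _; rewrite coefMX /= -iterSr.
Qed.

Lemma polyOpX y : polyOp 'X T y = T y.
Proof. by rewrite -['X]mul1r polyOpMX polyOp1. Qed.

Lemma polyOpXn n y : polyOp 'X^n T y = iter n T y.
Proof.
elim: n y => [|n IH] y; first by rewrite expr0 polyOp1.
by rewrite exprS mulrC polyOpMX IH iterSr.
Qed.

Lemma polyOpM (p q : {poly K}) y : polyOp (p * q) T y = polyOp p T (polyOp q T y).
Proof.
elim/poly_ind: q y => [|q c IH] y; first by rewrite mulr0 !polyOp0 linear0.
rewrite mulrDr mulrA polyOpD polyOpMX IH mulrC mul_polyC polyOpZ.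
by rewrite polyOpD polyOpMX polyOpC linearD linearZ.
Qed.

Definition polyOpE := (polyOpD, polyOpN, polyOpZ, polyOp1, polyOpC, polyOpX, polyOpXn).

Lemma iter_polyOp (p : {poly K}) n y : iter n T (polyOp p T y) = polyOp p T (iter n T y).
Proof. by rewrite -polyOpXn -polyOpM mulrC polyOpM polyOpXn. Qed.

Lemma range_polyOp_dvdp (d p : {poly K}) y : d %| p -> range (polyOp d T) (polyOp p T y).
Proof.
by move=> /divpK dp; exists (polyOp (p %/ d) T y) => //; rewrite -polyOpM mulrC dp.
Qed.

End PolyOp.

Lemma iter_continuous (Y : topologicalType) (f : Y -> Y) n :
  continuous f -> continuous (iter n f).
Proof.
move=> cf; elim: n => [|n IH] y /=; first exact: cvg_id.
exact: (continuous_comp (IH y) (cf _)).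
Qed.

Lemma continuous2_nbhs (A B C : topologicalType) (op : A * B -> C) a b W :
  {for (a, b), continuous op} -> nbhs (op (a, b)) W ->
  exists U V, [/\ nbhs a U, nbhs b V & forall u v, U u -> V v -> W (op (u, v))].
Proof.
move=> cop /cop [[U V] /= [hU hV] UVW].
by exists U, V; split=> // u v Uu Vv; apply: (UVW (u, v)).
Qed.

Lemma nbhs0_ltnorm (K : numFieldType) (A : set K^o) :
  nbhs 0 A -> exists2 e : K, 0 < e & forall s, `|s| < e -> A s.
Proof.
move=> /nbhs_ballP [e e0 sub]; exists e => // s hs; apply: sub.
by rewrite /ball /= sub0r normrN.
Qed.

Section LmodTopology.
Variables (K : numFieldType) (X : topologicalLmodType K).

Lemma lmod_scaler_continuous (a : K) : continuous (fun w : X => a *: w).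
Proof.
move=> w; apply: (@continuous_comp _ (K^o * X)%type _ (pair a) (fun z => z.1 *: z.2)).
  by apply: (@cvg_pair _ _ _ (nbhs w) (nbhs (a : K^o))); [exact: cvg_cst|exact: cvg_id].
exact: scale_continuous.
Qed.

Lemma lmod_scalel_continuous (w : X) : continuous (fun s : K^o => s *: w).
Proof.
move=> s; apply: (@continuous_comp _ (K^o * X)%type _ (pair^~ w) (fun z => z.1 *: z.2)).
  by apply: (@cvg_pair _ _ _ (nbhs s) (nbhs s)); [exact: cvg_id|exact: cvg_cst].
exact: scale_continuous.
Qed.

Lemma polyOp_continuous (T : {linear X -> X}) (p : {poly K}) :
  continuous T -> continuous (polyOp p T).
Proof.
move=> cT; elim/poly_ind: p => [|p c IH].
  have -> : polyOp 0 T = cst 0 by apply/funext => y; rewrite polyOp0.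
  exact: cst_continuous.
have -> : polyOp (p * 'X + c%:P) T = fun y => polyOp p T (T y) + c *: y.
  by apply/funext => y; rewrite polyOpD polyOpMX polyOpC.
move=> y; apply: (@continuous_comp _ (X * X)%type _ (fun y => (polyOp p T (T y), c *: y))
  (fun z => z.1 + z.2)); last exact: add_continuous.
apply: cvg_pair; last exact: lmod_scaler_continuous.
exact: (continuous_comp (cT y) (IH _)).
Qed.

Lemma nbhs0_scale_bounded (C : K) (V : set X) : nbhs 0 V ->
  exists2 W, nbhs 0 W & forall w s, W w -> `|s| <= C -> V (s *: w).
Proof.
move=> hV; have {hV} : nbhs ((0 : K^o) *: (0 : X)) V by rewrite scaler0.
move=> /(continuous2_nbhs (@scale_continuous _ _ _)) [A [W [/nbhs0_ltnorm [e e0 Ae] hW AWV]]].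
set c := e / (`|C| + 1).
have C1 : 0 < `|C| + 1 by rewrite ltr_wpDl.
have c0 : 0 < c by rewrite divr_gt0.
exists (fun w => W (c^-1 *: w)).
  by apply: (@lmod_scaler_continuous c^-1 0); rewrite scaler0.
move=> w s Ww sC; rewrite -[w](scalerKV (negbT (gt_eqF c0))) scalerA.
apply: AWV Ww; apply: Ae; rewrite normrM (gtr0_norm c0) -ltr_pdivlMr //.
have C0 : 0 <= C := le_trans (normr_ge0 s) sC.
rewrite /c invf_div mulrC divfK ?gt_eqF // (ger0_norm C0).
by apply: le_lt_trans sC _; rewrite ltrDl.
Qed.

End LmodTopology.

Definition orbit_tails_dense (Y : topologicalType) (f : Y -> Y) (x : Y) :=
  forall (N : nat) (y : Y) (W : set Y), nbhs y W ->
    exists2 n, (N <= n)%N & W (iter n f x).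

Lemma dense_range_comp (A B C : topologicalType) (f : B -> C) (g : A -> B) :
  continuous f -> dense (range f) -> dense (range g) -> dense (range (f \o g)).
Proof.
move=> cf df dg O O0 oO.
have [t [Ot [z _ ft]]] := df O O0 oO; rewrite -ft in Ot.
have [u [Ou [y _ gu]]] := dg (f @^-1` O) (ex_intro _ z Ot)
  ((continuousP f).1 cf O oO).
by exists (f (g y)); split; [rewrite /= gu|exists y].
Qed.

Section DenseRange.
Variables (K : numFieldType) (X : topologicalLmodType K) (T : {linear X -> X}).
Hypothesis cT : continuous T.

Lemma dense_range_polyOp_closure (x : X) (p : {poly K}) :
  orbit_tails_dense T x -> closure (range (polyOp p T)) x ->
  dense (range (polyOp p T)).
Proof.
move=> hx clx O [z Oz] oO.
have [n _ Onx] := hx 0 z O (open_nbhs_nbhs (conj oO Oz)).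
have onO : open (iter n T @^-1` O) by apply: (continuousP _).1 oO; exact: iter_continuous.
have [_ [[y _ <-] /= Ony]] := clx _ (open_nbhs_nbhs (conj onO Onx)).
by exists (iter n T (polyOp p T y)); split=> //; exists (iter n T y); rewrite ?iter_polyOp.
Qed.

Lemma dense_range_polyOp_factor (D : set {poly K}) :
  (forall d, D d -> dense (range (polyOp d T))) ->
  (forall p : {poly K}, (1 < size p)%N ->
    exists d, [/\ D d, (1 < size d)%N & d %| p]) ->
  forall p : {poly K}, p != 0 -> dense (range (polyOp p T)).
Proof.
move=> dD factor p; have [n] := ubnP (size p); elim: n p => // n IH p.
rewrite ltnS => sp p0; have [s1|s1] := leqP (size p) 1.
  rewrite [p]size1_polyC // polyC_eq0 in p0 * => O [z Oz] _.
  by exists z; split=> //; exists ((p`_0)^-1 *: z) => //; rewrite polyOpC scalerKV.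
have [d [Dd sd dp]] := factor p s1.
have d0 : d != 0 by rewrite -size_poly_eq0 -lt0n (ltn_trans _ sd).
have q0 : p %/ d != 0 by rewrite dvdp_div_eq0.
have -> : polyOp p T = polyOp (p %/ d) T \o polyOp d T.
  by apply/funext => y; rewrite /comp -polyOpM divpK.
apply: (dense_range_comp (polyOp_continuous (p:=p %/ d) cT) (IH _ _ q0) (dD _ Dd)).
rewrite size_divp //; move: (size p) (size d) sp s1 sd => m [|k] //=; lia.
Qed.

End DenseRange.

Section OrbitApproximation.
Variables (K : numFieldType) (X : topologicalLmodType K) (T : {linear X -> X}).
Variable x : X.
Hypotheses (cT : continuous T) (hx : orbit_tails_dense T x).

Lemma nbhs0_add_split (B : set X) : nbhs 0 B ->
  exists B1 B2, [/\ nbhs 0 B1, nbhs 0 B2 & forall b1 b2, B1 b1 -> B2 b2 -> B (b1 + b2)].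
Proof.
move=> hB; have {hB} : nbhs (0 + 0 : X) B by rewrite addr0.
move=> /(continuous2_nbhs (@add_continuous _ _)).
by move=> [B1 [B2 [? ? ?]]]; exists B1, B2.
Qed.

Lemma nbhs_sub_split (W : set X) : nbhs x W ->
  exists A B, [/\ nbhs x A, nbhs 0 B & forall a b, A a -> B b -> W (a - b)].
Proof.
move=> hW; have {hW} : nbhs (x - 0) W by rewrite subr0.
move=> /(continuous2_nbhs (@sub_continuous _ _)).
by move=> [A [B [? ? ?]]]; exists A, B.
Qed.

Lemma orbit_approx_bounded (C : K) (W : set X) : nbhs x W ->
  exists n, forall s t : K, `|s| <= C -> `|t| <= C ->
    W (x - (s *: iter n T x + t *: iter n.+1 T x)).
Proof.
move=> /nbhs_sub_split [A [B [/nbhs_singleton Ax hB AB]]].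
have [B1 [B2 [hB1 hB2 B12]]] := nbhs0_add_split hB.
have [W1 hW1 W1B1] := nbhs0_scale_bounded C hB1.
have [W2 hW2 W2B2] := nbhs0_scale_bounded C hB2.
have hTW2 : nbhs 0 (T @^-1` W2) by apply: cT; rewrite linear0.
have [n _ [W1n W2n]] := hx 0 (filterI hW1 hTW2).
by exists n => s t sC tC; apply: AB => //; apply: B12; [exact: W1B1|exact: W2B2].
Qed.

Lemma orbit_approx_tail (c d : nat -> K) :
  (forall e, 0 < e -> \forall n \near \oo, `|c n| < e) ->
  (forall e, 0 < e -> \forall n \near \oo, `|d n| < e) ->
  forall W, nbhs x W -> exists n, W (iter n T x - (c n *: x + d n *: T x)).
Proof.
move=> c_small d_small W /nbhs_sub_split [A [B [hA hB AB]]].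
have [B1 [B2 [hB1 hB2 B12]]] := nbhs0_add_split hB.
have /nbhs0_ltnorm [e1 e10 B1x] : nbhs (0 : K^o) (fun s => B1 (s *: x)).
  by apply: lmod_scalel_continuous; rewrite scale0r.
have /nbhs0_ltnorm [e2 e20 B2Tx] : nbhs (0 : K^o) (fun s => B2 (s *: T x)).
  by apply: lmod_scalel_continuous; rewrite scale0r.
have [N _ cdN] := filterI (c_small _ e10) (d_small _ e20).
have [n Nn An] := hx N hA; have [cn dn] := cdN n Nn.
by exists n; apply: AB => //; apply: B12; [exact: B1x|exact: B2Tx].
Qed.

End OrbitApproximation.

Section LinearFactor.
Variables (K : numFieldType) (X : topologicalLmodType K) (T : {linear X -> X}) (x : X).
Hypotheses (cT : continuous T) (hx : orbit_tails_dense T x).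

Lemma closure_range_XsubC (l : K) :
  (`|l| < 1 -> forall e, 0 < e -> \forall n \near \oo, `|l ^+ n| < e) ->
  closure (range (polyOp ('X - l%:P) T)) x.
Proof.
move=> geo W hW; have [l1|l1] := boolP (1 <= `|l|).
  have ln0 n : l ^+ n != 0 by rewrite expf_neq0 // -normr_gt0 (lt_le_trans ltr01).
  have [n Wn] := orbit_approx_bounded cT hx 1 hW.
  exists (polyOp (1 - (l ^+ n)^-1 *: 'X^n) T x); split.
    by apply/range_polyOp_dvdp; rewrite dvdp_XsubCl /root !hornerE mulVf ?subrr.
  have l_n : `|(l ^+ n)^-1| <= 1.
    rewrite normrV ?unitfE // invr_le1 ?unitfE ?normr_gt0 ?normr_eq0 //.
    by rewrite normrX exprn_ege1.
  by move: (Wn _ 0 l_n); rewrite normr0 ler01 scale0r addr0 !polyOpE; apply.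
have l1' : `|l| < 1 by rewrite real_ltNge ?normr_real.
have zero_small e : 0 < e -> \forall n \near \oo, `|(0 : K)| < e.
  by move=> e0; near=> n; rewrite normr0.
have [n Wn] := orbit_approx_tail hx (d := fun=> 0) (geo l1') zero_small hW.
exists (polyOp ('X^n - (l ^+ n)%:P) T x); split.
  by apply/range_polyOp_dvdp; rewrite dvdp_XsubCl /root !hornerE subrr.
by rewrite !polyOpE; rewrite scale0r addr0 in Wn.
Unshelve. all: by end_near.
Qed.

End LinearFactor.

Definition quadp (K : nzRingType) (a b : K) : {poly K} := 'X^2 - a *: 'X + b%:P.

Lemma size_quadp (K : nzRingType) (a b : K) : size (quadp a b) = 3%N.
Proof.
rewrite /quadp -addrA size_polyDl ?size_polyXn // ltnS (leq_trans (size_polyD _ _)) //.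
rewrite geq_max size_polyN (leq_trans (size_scale_leq _ _)) ?size_polyX //.
by rewrite size_polyC; case: (b != 0).
Qed.

(* [quad_rem a b n = (al, be)] with [X^n = al + be X] modulo [quadp a b]. *)
Fixpoint quad_rem (K : nzRingType) (a b : K) n : K * K :=
  if n is n'.+1 then let r := quad_rem a b n' in (- b * r.2, r.1 + a * r.2) else (1, 0).

Lemma dvdp_quadp_Xn (K : fieldType) (a b : K) n :
  quadp a b %| 'X^n - ((quad_rem a b n).2 *: 'X + (quad_rem a b n).1%:P).
Proof.
elim: n => [|n IH]; first by rewrite scale0r add0r expr0 subrr dvdp0.
have -> : 'X^(n.+1) - ((quad_rem a b n.+1).2 *: 'X + (quad_rem a b n.+1).1%:P) =
    'X * ('X^n - ((quad_rem a b n).2 *: 'X + (quad_rem a b n).1%:P)) +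
    (quad_rem a b n).2%:P * quadp a b.
  rewrite /quadp /=; case: (quad_rem a b n) => al be /=.
  rewrite -!mul_polyC !(polyCM, polyCD, polyCN) (exprS 'X n); ring.
by rewrite dvdp_add ?dvdp_mull.
Qed.

Lemma dvdp_quadp_comb (K : fieldType) (a b s t : K) n :
  s * (quad_rem a b n).1 + t * (quad_rem a b n.+1).1 = 1 ->
  s * (quad_rem a b n).2 + t * (quad_rem a b n.+1).2 = 0 ->
  quadp a b %| 1 - (s *: 'X^n + t *: 'X^(n.+1)).
Proof.
set r0 := quad_rem a b n; set r1 := quad_rem a b n.+1 => h1 h2.
have -> : 1 - (s *: 'X^n + t *: 'X^(n.+1)) =
    - (s%:P * ('X^n - (r0.2 *: 'X + r0.1%:P)) + t%:P * ('X^(n.+1) - (r1.2 *: 'X + r1.1%:P)))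
    + (1 - (s * r0.1 + t * r1.1))%:P - (s * r0.2 + t * r1.2) *: 'X.
  by rewrite -!mul_polyC !(polyCM, polyCD, polyCN, polyCB, polyC1) !(exprS 'X n); ring.
rewrite h1 h2 subrr scale0r subr0 addr0 dvdpNr.
by rewrite dvdp_add ?dvdp_mull ?dvdp_quadp_Xn.
Qed.

Section QuadRemBounds.
Variables (R : realFieldType) (a b : R).
Local Notation al n := (quad_rem a b n).1.
Local Notation be n := (quad_rem a b n).2.

(* The norm of [al n + be n X] in [R[X] / (quadp a b)] is multiplicative. *)
Lemma quad_rem_norm n : al n ^+ 2 + a * al n * be n + b * be n ^+ 2 = b ^+ n.
Proof.
elim: n => [|n IH] /=; first by rewrite expr0; ring.
by move: IH; case: (quad_rem a b n) => al be /= IH; rewrite [b ^+ n.+1]exprS -IH; ring.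
Qed.

Lemma quad_rem_det n : al n * be n.+1 - be n * al n.+1 = b ^+ n.
Proof. by rewrite -quad_rem_norm /=; case: (quad_rem a b n) => al be /=; ring. Qed.

Lemma quad_rem2_bound n : (4 * b - a ^+ 2) * be n ^+ 2 <= 4 * b ^+ n.
Proof.
rewrite -quad_rem_norm; case: (quad_rem a b n) => al be /=.
have := sqr_ge0 (2 * al + a * be); nra.
Qed.

Lemma quad_rem1_bound n : 0 < b -> (4 * b - a ^+ 2) * al n ^+ 2 <= 4 * b * b ^+ n.
Proof.
move=> b0; rewrite -quad_rem_norm; case: (quad_rem a b n) => al be /=.
have := sqr_ge0 (2 * b * be + a * al); nra.
Qed.

Lemma quad_rem2_scaled_bound n m : 1 <= b -> (m <= n.+1)%N ->
  (4 * b - a ^+ 2) * (be m / b ^+ n) ^+ 2 <= 4 * b.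
Proof.
move=> b1 mn; have b0 : 0 < b by rewrite (lt_le_trans ltr01).
have bn1 : 1 <= b ^+ n by rewrite exprn_ege1.
rewrite expr_div_n mulrA ler_pdivrMr ?exprn_gt0 //.
apply: le_trans (quad_rem2_bound m) _; rewrite -mulrA ler_pM2l ?ltr0n //.
apply: le_trans (ler_weXn2l b1 mn) _; rewrite exprS ler_pM2l //.
by rewrite expr2 ler_peMr // (le_trans ler01).
Qed.

End QuadRemBounds.

Lemma sqr_geometric_small (R : realType) (b C D : R) (v : nat -> R) :
  0 < D -> `|b| < 1 -> (forall n, D * v n ^+ 2 <= C * b ^+ n) ->
  forall e, 0 < e -> \forall n \near \oo, `|v n| < e.
Proof.
move=> D0 b1 hv e e0; set eps := D * e ^+ 2 / (`|C| + 1).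
have C1 : 0 < `|C| + 1 by rewrite ltr_wpDl.
have eps0 : 0 < eps by rewrite !divr_gt0 ?mulr_gt0 ?exprn_gt0.
have Ceps : `|C| * eps < D * e ^+ 2.
  by rewrite /eps mulrA ltr_pdivrMr // mulrC ltr_pM2l ?mulr_gt0 ?exprn_gt0 // ltrDl.
near=> n.
have bn : `|b ^+ n| < eps by near: n; exact: cvgr0_norm_lt (cvg_expr b1) _ eps0.
have Dvn : D * v n ^+ 2 < D * e ^+ 2.
  apply: le_lt_trans (hv n) (le_lt_trans (ler_norm _) _).
  rewrite normrM; apply: le_lt_trans _ Ceps.
  exact: (ler_wpM2l (normr_ge0 C) (ltW bn)).
rewrite ltr_pM2l // -real_normK ?num_real // in Dvn.
by have := normr_ge0 (v n); nra.
Unshelve. all: by end_near.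
Qed.

Lemma norm_le_of_sqr (R : realFieldType) (D c s : R) :
  0 < D -> D * s ^+ 2 <= c -> `|s| <= 1 + c / D.
Proof.
move=> D0 hs; have sc : s ^+ 2 <= c / D by rewrite ler_pdivlMr // mulrC.
have := sqr_ge0 (`|s| - 1); rewrite -[s ^+ 2]real_normK ?num_real // in sc.
have := normr_ge0 s; nra.
Qed.

Section QuadraticFactor.
Variables (R : realType) (X : topologicalLmodType R) (T : {linear X -> X}) (x : X).
Hypotheses (cT : continuous T) (hx : orbit_tails_dense T x).

Lemma closure_range_quadp (a b : R) : a ^+ 2 < 4 * b ->
  closure (range (polyOp (quadp a b) T)) x.
Proof.
move=> disc W hW; set D := 4 * b - a ^+ 2.
have D0 : 0 < D by rewrite subr_gt0.
have b0 : 0 < b by have := sqr_ge0 a; lra.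
have [b1|b1] := lerP 1 b.
  have [n Wn] := orbit_approx_bounded cT hx (1 + 4 * b / D) hW.
  have bn0 : b ^+ n != 0 by rewrite expf_neq0 // gt_eqF.
  set s := (quad_rem a b n.+1).2 / b ^+ n; set t := - ((quad_rem a b n).2 / b ^+ n).
  exists (polyOp (1 - (s *: 'X^n + t *: 'X^(n.+1))) T x); split.
    apply/range_polyOp_dvdp/dvdp_quadp_comb; last by rewrite /s /t; ring.
    by apply: (mulIf bn0); rewrite mul1r -[X in _ = X](quad_rem_det a b n) /s /t; field.
  rewrite !polyOpE; apply: Wn; apply: norm_le_of_sqr D0 _.
    exact: quad_rem2_scaled_bound.
  by rewrite sqrrN; exact: quad_rem2_scaled_bound.
have b1' : `|b| < 1 by rewrite ger0_norm ?ltW.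
have al_small := sqr_geometric_small D0 b1' (fun n => quad_rem1_bound a n b0).
have be_small := sqr_geometric_small D0 b1' (quad_rem2_bound a b).
have [n Wn] := orbit_approx_tail hx al_small be_small hW.
exists (polyOp ('X^n - ((quad_rem a b n).2 *: 'X + (quad_rem a b n).1%:P)) T x).
by split; [exact/range_polyOp_dvdp/dvdp_quadp_Xn | rewrite !polyOpE [_ + _ *: x]addrC].
Qed.

End QuadraticFactor.

Section RealFactorization.
Local Open Scope complex_scope.
Variable R : realType.
Local Notation rc := (real_complex R).

Lemma quadp_conj_root (u v : R) :
  (map_poly rc (quadp (2 * u) (u ^+ 2 + v ^+ 2))).[u +i* v] = 0.
Proof.
rewrite /quadp !rmorphD rmorphN /= map_polyZ map_polyXn map_polyX !map_polyC !hornerE /=.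
by simpc; apply/eqP; rewrite eq_complex /=; apply/andP; split; apply/eqP; ring.
Qed.

Lemma quadp_dvdp_of_complex_root (p : {poly R}) (u v : R) : v != 0 ->
  (map_poly rc p).[u +i* v] = 0 -> quadp (2 * u) (u ^+ 2 + v ^+ 2) %| p.
Proof.
move=> v0 pz; set f := quadp _ _.
have f0 : f != 0 by rewrite -size_poly_eq0 size_quadp.
have sr : (size (p %% f)%R <= 2)%N by have := ltn_modp p f; rewrite f0 size_quadp.
have rz : (map_poly rc (p %% f)%R).[u +i* v] = 0.
  move: pz; rewrite {1}(divp_eq p f) rmorphD rmorphM /= !hornerE quadp_conj_root.
  by rewrite mulr0 add0r.
rewrite (horner_coef_wide _ (n:=2)) ?size_map_poly // !big_ord_recr big_ord0 /= in rz.
rewrite !coef_map /= add0r expr0 mulr1 expr1 in rz.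
move: rz; simpc; case=> r0 r1.
have {}r1 : (p %% f)%R`_1 = 0 by move/eqP: r1; rewrite mulf_eq0 (negbTE v0) orbF => /eqP.
move: r0; rewrite r1 mul0r addr0 => r0.
rewrite /dvdp; apply/eqP/polyP => -[|[|i]]; rewrite coef0 //.
by rewrite nth_default // (leq_trans sr).
Qed.

Lemma real_poly_factor (p : {poly R}) : (1 < size p)%N ->
  (exists l, root p l) \/ exists a b, a ^+ 2 < 4 * b /\ quadp a b %| p.
Proof.
move=> sp; have [[l pl]|nr] := pselect (exists l, root p l); [by left; exists l|right].
have [[u v] /eqP pz] : exists z, root (map_poly rc p) z.
  apply/closed_rootP; rewrite size_map_inj_poly ?rmorph0 //; last exact: complexI.
  by apply: contraTneq sp => ->.
have v0 : v != 0.
  apply: contra_notN nr => /eqP v0; exists u; apply/eqP/complexI.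
  by rewrite rmorph0 -horner_map -pz v0.
exists (2 * u), (u ^+ 2 + v ^+ 2); split; last exact: quadp_dvdp_of_complex_root.
have : 0 < v ^+ 2 by rewrite exprn_even_gt0.
nra.
Qed.

End RealFactorization.

Lemma geometric_small (R : realType) (l : R) : `|l| < 1 ->
  forall e, 0 < e -> \forall n \near \oo, `|l ^+ n| < e.
Proof. by move=> l1; apply: cvgr0_norm_lt (cvg_expr l1). Qed.

Lemma geometric_small_complex (R : realType) (l : R[i]) : `|l| < 1 ->
  forall e, 0 < e -> \forall n \near \oo, `|l ^+ n| < e.
Proof.
move=> l1 [e1 e2]; rewrite ltcE /= => /andP [/eqP e20 e10].
move: l1; rewrite normc_def -(rmorph1 (real_complex R)) ltcR.
set r := Num.sqrt _ => r1; have r0 : 0 <= r by apply: sqrtr_ge0.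
near=> n; rewrite normrX normc_def -/r -rmorphXn ltcE /= e20 eqxx /=.
suff : `|r ^+ n| < e1 by rewrite ger0_norm ?exprn_ge0.
by near: n; apply: geometric_small; rewrite ?ger0_norm.
Unshelve. all: by end_near.
Qed.

Section DenseRangeFactors.
Variable R : realType.

Lemma dense_range_polyOp_real (X : topologicalLmodType R) (T : {linear X -> X}) x :
  continuous T -> orbit_tails_dense T x ->
  forall p : {poly R}, p != 0 -> dense (range (polyOp p T)).
Proof.
move=> cT hx; apply: (dense_range_polyOp_factor cT
  (D := [set d | (exists l, d = 'X - l%:P) \/ exists a b, a ^+ 2 < 4 * b /\ d = quadp a b])).
  move=> _ [[l ->]|[a [b [disc ->]]]]; apply: (dense_range_polyOp_closure cT hx).
    by apply: (closure_range_XsubC cT hx); apply: geometric_small.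
  exact: (closure_range_quadp cT hx).
move=> p /real_poly_factor [[l pl]|[a [b [disc qp]]]].
  by exists ('X - l%:P); split; [left; exists l|rewrite size_XsubC|rewrite dvdp_XsubCl].
by exists (quadp a b); split; [right; exists a, b|rewrite size_quadp|].
Qed.

Lemma dense_range_polyOp_complex (X : topologicalLmodType R[i]) (T : {linear X -> X}) x :
  continuous T -> orbit_tails_dense T x ->
  forall p : {poly R[i]}, p != 0 -> dense (range (polyOp p T)).
Proof.
move=> cT hx; apply: (dense_range_polyOp_factor cT (D := [set d | exists l, d = 'X - l%:P])).
  move=> _ [l ->]; apply: (dense_range_polyOp_closure cT hx).
  by apply: (closure_range_XsubC cT hx); apply: geometric_small_complex.
move=> p sp; have [l pl] : exists l, root p l by apply/closed_rootP; rewrite neq_ltn sp orbT.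
by exists ('X - l%:P); split; [exists l|rewrite size_XsubC|rewrite dvdp_XsubCl].
Qed.

End DenseRangeFactors.

Section FurstenbergFamily.
Variables (F : set (set nat)) (hF : furstenberg_family F).

Lemma furstenberg_nonempty A : F A -> A !=set0.
Proof.
case: hF => infF _ _ FA; apply/set0P/eqP => A0.
by apply: (infF _ FA); rewrite A0; exact: finite_set0.
Qed.

Lemma F_hypercyclic_orbit_tails_dense (Y : topologicalType) (f : Y -> Y) x :
  F_hypercyclic_vector F f x -> orbit_tails_dense f x.
Proof.
move=> hx N y W; rewrite nbhsE => -[B [oB By] BW].
case: hF => infF _ _; apply: contrapT => noW; apply: (infF _ (hx B oB (ex_intro _ y By))).
apply: (sub_finite_set _ (finite_II N)) => n /= Bn; rewrite ltnNge.
by apply/negP => Nn; apply: noW; exists n => //; exact: BW.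
Qed.

Lemma F_hypercyclic_comm (Y : topologicalType) (f g : Y -> Y) x :
  continuous g -> (forall n y, iter n f (g y) = g (iter n f y)) -> dense (range g) ->
  F_hypercyclic_vector F f x -> F_hypercyclic_vector F f (g x).
Proof.
move=> cg gf dg hx U oU U0.
have [u [Uu [z _ zu]]] := dg U U0 oU; rewrite -zu in Uu.
have /hx : open (g @^-1` U) by apply: (continuousP _).1 oU.
case: hF => _ supF _ /(_ (ex_intro _ z Uu)) /supF; apply=> n /=.
by rewrite gf.
Qed.

Lemma F_hypercyclic_dense_orbit_setD1 (Y : topologicalType) (f : Y -> Y) x z :
  closed [set z] -> ~ open [set z] -> F_hypercyclic_vector F f x ->
  dense ([set iter n f x | n in setT] `\ z).
Proof.
move=> cz noz hx O [y Oy] oO.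
have [[w [Ow wz]]|Oz] := pselect (exists w, O w /\ w <> z).
  have oOz : open (O `\ z) by apply: openI => //; exact/closed_openC.
  have [n [On nz]] := furstenberg_nonempty (hx _ oOz (ex_intro _ w (conj Ow wz))).
  by exists (iter n f x); split=> //; split=> //; exists n.
have Oz1 : O = [set z].
  apply/seteqP; split=> w /= => [Ow|->]; apply: contrapT => wz; apply: Oz.
    by exists w.
  by exists y; split=> // yz; apply: wz; rewrite -yz.
by rewrite Oz1 in oO.
Qed.

End FurstenbergFamily.

Lemma Fspace_closed0 (R : realType) (K : numFieldType) (X : topologicalLmodType K) :
  Fspace R X -> closed [set 0 : X].
Proof.
move=> [d [d0 [deq [_ [_ [_ [dopen _]]]]]]]; rewrite -[X in closed X]setCK.
apply/open_closedC/dopen => z /= z0; exists (d z 0) => [|y dzy y0].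
  by rewrite lt_neqAle d0 andbT eq_sym; apply/eqP => /deq.
by rewrite y0 ltxx in dzy.
Qed.

Lemma infinite_dimensional_nonzero (K : numFieldType) (X : lmodType K) :
  infinite_dimensional X -> exists v : X, v != 0.
Proof.
move=> /(_ [::]) [v nv]; exists v; apply/eqP => v0.
by apply: (nv (fun=> 0)); rewrite v0 big_ord0.
Qed.

Lemma set1_0_not_open (K : numFieldType) (X : topologicalLmodType K) (v : X) :
  v != 0 -> ~ open [set 0 : X].
Proof.
move=> v0 o0; have : nbhs (0 : K^o) ((fun s : K^o => s *: v) @^-1` [set 0]).
  by apply: lmod_scalel_continuous; rewrite scale0r; exact: open_nbhs_nbhs.
move=> /nbhs0_ltnorm [e e0 /(_ (e / 2))].
rewrite /= ger0_norm ?divr_ge0 ?ltW // ltr_pdivrMr // ltr_pMr // ltr1n.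
by move=> /(_ isT) /eqP; rewrite scaler_eq0 (negbTE v0) orbF mulf_eq0 invr_eq0 pnatr_eq0 orbF (gt_eqF e0).
Qed.

Section Conclusion.
Variables (K : numFieldType) (X : topologicalLmodType K) (T : {linear X -> X}).
Variable F : set (set nat).
Hypotheses (cT : continuous T) (hF : furstenberg_family F).
Hypotheses (closed0 : closed [set 0 : X]) (not_open0 : ~ open [set 0 : X]).
Hypothesis dense_range_polyOp : forall x : X, orbit_tails_dense T x ->
  forall p : {poly K}, p != 0 -> dense (range (polyOp p T)).

Lemma F_hypercyclic_polyOp x : F_hypercyclic_vector F T x ->
  let P := [set y | exists p : {poly K}, y = polyOp p T x] `\ 0 in
  dense P /\ (forall y, P y -> F_hypercyclic_vector F T y).
Proof.
move=> hx P; split.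
  move=> O O0 oO; have [y [Oy [[n _ ny] y0]]] :=
    F_hypercyclic_dense_orbit_setD1 hF closed0 not_open0 hx O0 oO.
  by exists y; split=> //; split=> //; exists 'X^n; rewrite polyOpXn.
move=> _ [[p ->] y0]; have p0 : p != 0 by apply: contra_notN y0 => /eqP ->; rewrite polyOp0.
apply: (F_hypercyclic_comm hF (polyOp_continuous cT)) => //; first exact: iter_polyOp.
exact: dense_range_polyOp (F_hypercyclic_orbit_tails_dense hF hx) _ p0.
Qed.

Lemma conclusion_of_dense_range_polyOp : conclusion T F.
Proof.
split; first exact: F_hypercyclic_polyOp.
move=> [x /F_hypercyclic_polyOp [dP hP]].
exists [set y | exists p : {poly K}, y = polyOp p T x]; split.
- by exists 0; rewrite polyOp0.
- by move=> a _ _ [p ->] [q ->]; exists (a *: p + q); rewrite polyOpD polyOpZ.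
- by move=> _ [p ->]; exists (p * 'X); rewrite polyOpMX -(iter_polyOp T p 1).
- by move=> O O0 oO; have [y [Oy [Py _]]] := dP O O0 oO; exists y.
- by move=> u Mu u0; apply: hP.
Qed.

End Conclusion.

Theorem mainTheorem18 (R : realType) :
  (forall (X : topologicalLmodType R) (T : {linear X -> X}) (F : set (set nat)),
     Fspace R X -> separable X -> infinite_dimensional X -> continuous T ->
     furstenberg_family F -> right_invariant F ->
     conclusion T F)
  /\
  (forall (X : topologicalLmodType R[i]) (T : {linear X -> X}) (F : set (set nat)),
     Fspace R X -> separable X -> infinite_dimensional X -> continuous T ->
     furstenberg_family F -> right_invariant F ->
     conclusion T F).
Proof.
split=> X T F /Fspace_closed0 cl0 _ /infinite_dimensional_nonzero [v v0] cT hF _;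
  apply: (conclusion_of_dense_range_polyOp cT hF cl0 (set1_0_not_open v0)) => x hx.
  exact: (dense_range_polyOp_real cT hx).
exact: (dense_range_polyOp_complex cT hx).
Qed.
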